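(* Let $\Omega\subseteq\mathbb{R}^3$ be a domain. If $b\colon\Omega\to\mathbb{R}$ is a real-valued biharmonic function (i.e. $\Delta_3^2 b=0$), then $\partial b\,\partial$ is inframonogenic and $\overline{\partial}\, b\,\overline{\partial}$ is antiinframonogenic. If $f=f_0+f_1e_1+f_2e_2\colon\Omega\to\mathbb{R}^3$ is inframonogenic or antiinframonogenic, then every component $f_i$ ($i=0,1,2$) of $f$ is biharmonic.
   Context: $\mathbb{H}$ denotes the real quaternions with basis $e_0=1,e_1,e_2,e_3$ and $e_1^2=e_2^2=e_3^2=e_1e_2e_3=-1$. $\mathbb{R}^3$ is identified with the reduced quaternions $x=x_0+x_1e_1+x_2e_2$. Write $\partial_i=\partial/\partial x_i$ and $\Delta_3=\partial_0^2+\partial_1^2+\partial_2^2$. For a (sufficiently differentiable) $\mathbb{H}$-valued function $f$, the left operators are $\overline{\partial} f=\partial_0 f+e_1\partial_1 f+e_2\partial_2 f$ and $\partial f=\partial_0 f-e_1\partial_1 f-e_2\partial_2 f$, and the right operators are $f\overline{\partial}=\partial_0 f+(\partial_1 f)e_1+(\partial_2 f)e_2$ and $f\partial=\partial_0 f-(\partial_1 f)e_1-(\partial_2 f)e_2$. The two-sided operators are $\overline{\partial} f\overline{\partial}:=\overline{\partial}(f\overline{\partial})=(\overline{\partial}f)\overline{\partial}$ and similarly $\partial f\partial$. A function $f$ is inframonogenic if $\overline{\partial} f\overline{\partial}=0$ and antiinframonogenic if $\partial f\partial=0$. A real function is biharmonic if $\Delta_3^2$ of it vanishes. *)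

From Stdlib Require Import Reals Lra List.
From Coquelicot Require Import Coquelicot.
Open Scope R_scope.

(** * Real quaternions H with basis 1, e1, e2, e3 and
      e1^2 = e2^2 = e3^2 = e1 e2 e3 = -1  (so e1 e2 = e3, e2 e3 = e1, e3 e1 = e2). *)
Record quat := mkQ { q0 : R; q1 : R; q2 : R; q3 : R }.

Definition qadd (a b : quat) : quat :=
  mkQ (q0 a + q0 b) (q1 a + q1 b) (q2 a + q2 b) (q3 a + q3 b).
Definition qopp (a : quat) : quat := mkQ (- q0 a) (- q1 a) (- q2 a) (- q3 a).
Definition qsub (a b : quat) : quat := qadd a (qopp b).
Definition qmul (a b : quat) : quat :=
  mkQ (q0 a * q0 b - q1 a * q1 b - q2 a * q2 b - q3 a * q3 b)
      (q0 a * q1 b + q1 a * q0 b + q2 a * q3 b - q3 a * q2 b)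
      (q0 a * q2 b - q1 a * q3 b + q2 a * q0 b + q3 a * q1 b)
      (q0 a * q3 b + q1 a * q2 b - q2 a * q1 b + q3 a * q0 b).
Definition qzero : quat := mkQ 0 0 0 0.
Definition e1 : quat := mkQ 0 1 0 0.
Definition e2 : quat := mkQ 0 0 1 0.
Definition e3 : quat := mkQ 0 0 0 1.
Definition qreal (r : R) : quat := mkQ r 0 0 0.

(** * Functions on R^3 (points x = x0 + x1 e1 + x2 e2, written as three reals) *)
Definition rfun := R -> R -> R -> R.
Definition hfun := R -> R -> R -> quat.
Definition region := R -> R -> R -> Prop.

Inductive idx := I0 | I1 | I2.

Definition pd (i : idx) (g : rfun) : rfun :=
  match i with
  | I0 => fun x0 x1 x2 => Derive (fun t => g t x1 x2) x0
  | I1 => fun x0 x1 x2 => Derive (fun t => g x0 t x2) x1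
  | I2 => fun x0 x1 x2 => Derive (fun t => g x0 x1 t) x2
  end.

Definition ex_pd (i : idx) (g : rfun) (x0 x1 x2 : R) : Prop :=
  match i with
  | I0 => ex_derive (fun t => g t x1 x2) x0
  | I1 => ex_derive (fun t => g x0 t x2) x1
  | I2 => ex_derive (fun t => g x0 x1 t) x2
  end.

Fixpoint pds (l : list idx) (g : rfun) : rfun :=
  match l with
  | nil => g
  | i :: l' => pd i (pds l' g)
  end.

Definition cont3 (g : rfun) (x0 x1 x2 : R) : Prop :=
  forall eps : R, 0 < eps -> exists delta : R, 0 < delta /\
    forall y0 y1 y2 : R, Rabs (y0 - x0) < delta -> Rabs (y1 - x1) < delta ->
      Rabs (y2 - x2) < delta -> Rabs (g y0 y1 y2 - g x0 x1 x2) < eps.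

Definition Ck (k : nat) (Om : region) (g : rfun) : Prop :=
  forall l : list idx,
    (length l <= k)%nat ->
    (forall x0 x1 x2, Om x0 x1 x2 -> cont3 (pds l g) x0 x1 x2) /\
    ((length l < k)%nat ->
       forall i x0 x1 x2, Om x0 x1 x2 -> ex_pd i (pds l g) x0 x1 x2).

Definition open3 (U : region) : Prop :=
  forall x0 x1 x2, U x0 x1 x2 -> exists r : R, 0 < r /\
    forall y0 y1 y2, (y0 - x0)^2 + (y1 - x1)^2 + (y2 - x2)^2 < r^2 -> U y0 y1 y2.

Definition domain3 (Om : region) : Prop :=
  open3 Om /\
  (exists x0 x1 x2, Om x0 x1 x2) /\
  (forall U V : region, open3 U -> open3 V ->
     (forall x0 x1 x2, Om x0 x1 x2 -> U x0 x1 x2 \/ V x0 x1 x2) ->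
     (forall x0 x1 x2, Om x0 x1 x2 -> U x0 x1 x2 -> V x0 x1 x2 -> False) ->
     (exists x0 x1 x2, Om x0 x1 x2 /\ U x0 x1 x2) ->
     (exists x0 x1 x2, Om x0 x1 x2 /\ V x0 x1 x2) -> False).

Definition hpd (i : idx) (f : hfun) : hfun :=
  fun x0 x1 x2 =>
    mkQ (pd i (fun a b c => q0 (f a b c)) x0 x1 x2)
        (pd i (fun a b c => q1 (f a b c)) x0 x1 x2)
        (pd i (fun a b c => q2 (f a b c)) x0 x1 x2)
        (pd i (fun a b c => q3 (f a b c)) x0 x1 x2).

Definition dbarL (f : hfun) : hfun := fun x0 x1 x2 =>
  qadd (qadd (hpd I0 f x0 x1 x2) (qmul e1 (hpd I1 f x0 x1 x2)))
       (qmul e2 (hpd I2 f x0 x1 x2)).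
Definition dL (f : hfun) : hfun := fun x0 x1 x2 =>
  qsub (qsub (hpd I0 f x0 x1 x2) (qmul e1 (hpd I1 f x0 x1 x2)))
       (qmul e2 (hpd I2 f x0 x1 x2)).
Definition dbarR (f : hfun) : hfun := fun x0 x1 x2 =>
  qadd (qadd (hpd I0 f x0 x1 x2) (qmul (hpd I1 f x0 x1 x2) e1))
       (qmul (hpd I2 f x0 x1 x2) e2).
Definition dR (f : hfun) : hfun := fun x0 x1 x2 =>
  qsub (qsub (hpd I0 f x0 x1 x2) (qmul (hpd I1 f x0 x1 x2) e1))
       (qmul (hpd I2 f x0 x1 x2) e2).

Definition dbar2 (f : hfun) : hfun := dbarL (dbarR f).
Definition dd2 (f : hfun) : hfun := dL (dR f).

Definition inframonogenic (Om : region) (f : hfun) : Prop :=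
  forall x0 x1 x2, Om x0 x1 x2 -> dbar2 f x0 x1 x2 = qzero.
Definition antiinframonogenic (Om : region) (f : hfun) : Prop :=
  forall x0 x1 x2, Om x0 x1 x2 -> dd2 f x0 x1 x2 = qzero.

Definition lap3 (g : rfun) : rfun := fun x0 x1 x2 =>
  pd I0 (pd I0 g) x0 x1 x2 + pd I1 (pd I1 g) x0 x1 x2 + pd I2 (pd I2 g) x0 x1 x2.
Definition biharmonic (Om : region) (g : rfun) : Prop :=
  forall x0 x1 x2, Om x0 x1 x2 -> lap3 (lap3 g) x0 x1 x2 = 0.

Definition hreal (b : rfun) : hfun := fun x0 x1 x2 => qreal (b x0 x1 x2).
Definition hvec (f0 f1 f2 : rfun) : hfun := fun x0 x1 x2 =>
  mkQ (f0 x0 x1 x2) (f1 x0 x1 x2) (f2 x0 x1 x2) 0.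

From Stdlib Require Import Reals Lra Lia List.
From Coquelicot Require Import Coquelicot.
Open Scope R_scope.
Import ListNotations.

(** The four first-order operators have constant quaternionic coefficients, two acting
    from the left and two from the right.  For a C^2 function the partial derivatives
    commute (Schwarz), so every left operator commutes with every right one (left and
    right multiplications commute by associativity), and [dbar d = d dbar = Laplacian] on
    either side because [e1], [e2] anticommute and square to [-1].  Hence, for a C^4
    function [f], both [dbar (d f d) dbar] and [d (dbar f dbar) d] equal the componentwise
    bi-Laplacian of [f].  For real biharmonic [b] this makes [d b d] inframonogenic and
    [dbar b dbar] antiinframonogenic; conversely, if [dbar f dbar = 0] (or [d f d = 0])
    on the domain, so is the bi-Laplacian of every component of [f]. *)

Lemma pd_lin i (u v : rfun) (a b x0 x1 x2 : R) :
  ex_pd i u x0 x1 x2 -> ex_pd i v x0 x1 x2 ->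
  pd i (fun y0 y1 y2 => a * u y0 y1 y2 + b * v y0 y1 y2) x0 x1 x2
  = a * pd i u x0 x1 x2 + b * pd i v x0 x1 x2.
Proof.
  destruct i; simpl; intros Hu Hv; apply is_derive_unique; auto_derive; auto; ring.
Qed.

Lemma ex_pd_lin i (u v : rfun) (a b x0 x1 x2 : R) :
  ex_pd i u x0 x1 x2 -> ex_pd i v x0 x1 x2 ->
  ex_pd i (fun y0 y1 y2 => a * u y0 y1 y2 + b * v y0 y1 y2) x0 x1 x2.
Proof. destruct i; simpl; intros Hu Hv; auto_derive; auto. Qed.

Lemma cont3_lin (u v : rfun) (a b x0 x1 x2 : R) :
  cont3 u x0 x1 x2 -> cont3 v x0 x1 x2 ->
  cont3 (fun y0 y1 y2 => a * u y0 y1 y2 + b * v y0 y1 y2) x0 x1 x2.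
Proof.
  intros Hu Hv eps Heps.
  set (M := Rabs a + Rabs b + 1).
  pose proof (Rabs_pos a) as Ha; pose proof (Rabs_pos b) as Hb.
  assert (HepsM : 0 < eps / M) by (apply Rdiv_lt_0_compat; unfold M; lra).
  destruct (Hu (eps / M) HepsM) as [du [Hdu Hu']].
  destruct (Hv (eps / M) HepsM) as [dv [Hdv Hv']].
  exists (Rmin du dv); split; [apply Rmin_glb_lt; lra|].
  intros y0 y1 y2 H0 H1 H2.
  pose proof (Rmin_l du dv); pose proof (Rmin_r du dv).
  specialize (Hu' y0 y1 y2 ltac:(lra) ltac:(lra) ltac:(lra)).
  specialize (Hv' y0 y1 y2 ltac:(lra) ltac:(lra) ltac:(lra)).
  replace (a * u y0 y1 y2 + b * v y0 y1 y2 - (a * u x0 x1 x2 + b * v x0 x1 x2))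
    with (a * (u y0 y1 y2 - u x0 x1 x2) + b * (v y0 y1 y2 - v x0 x1 x2)) by ring.
  eapply Rle_lt_trans; [apply Rabs_triang|]. rewrite !Rabs_mult.
  assert (Heq : eps = Rabs a * (eps / M) + Rabs b * (eps / M) + eps / M)
    by (unfold M in *; field; lra).
  pose proof (Rmult_le_compat_l _ _ _ (Rabs_pos a) (Rlt_le _ _ Hu')).
  pose proof (Rmult_le_compat_l _ _ _ (Rabs_pos b) (Rlt_le _ _ Hv')).
  lra.
Qed.

(* Coquelicot's lemmas are instantiated with the functions read off the goal: left to
   unification they make it unfold the real-number operations and diverge.  Products go
   through the product rule because Ltac pattern variables may capture the bound [t]. *)
Ltac ex_derive_linear :=
  lazymatch goal with
  | |- ex_derive (fun t => @?f t + @?g t) ?x => apply (ex_derive_plus f g x); ex_derive_linear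
  | |- ex_derive (fun t => @?f t - @?g t) ?x => apply (ex_derive_minus f g x); ex_derive_linear
  | |- ex_derive (fun t => - @?f t) ?x => apply (ex_derive_opp f x); ex_derive_linear
  | |- ex_derive (fun t => @?f t * @?g t) ?x => apply (ex_derive_mult f g x); ex_derive_linear
  | |- _ => first [ assumption | apply (@ex_derive_const R_AbsRing R_NormedModule) ]
  end.

Ltac Derive_linear :=
  repeat match goal with
  | |- context [Derive (fun t => @?f t + @?g t) ?x] =>
      rewrite (Derive_plus f g x) by ex_derive_linear
  | |- context [Derive (fun t => @?f t - @?g t) ?x] =>
      rewrite (Derive_minus f g x) by ex_derive_linear
  | |- context [Derive (fun t => - @?f t) ?x] => rewrite (Derive_opp f x)
  | |- context [Derive (fun t => @?f t * @?g t) ?x] =>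
      rewrite (Derive_mult f g x) by ex_derive_linear
  | |- _ => rewrite Derive_const
  end;
  ring.

Lemma quat_ext a b : q0 a = q0 b -> q1 a = q1 b -> q2 a = q2 b -> q3 a = q3 b -> a = b.
Proof. destruct a, b; simpl; intros; subst; reflexivity. Qed.

Ltac quat_ring := apply quat_ext; cbn -[hpd]; ring.

(** * Functions of class C^k on an open set *)

Section OnOpenSet.

Variable Om : region.
Hypothesis Om_open : open3 Om.

Definition agree_on {A : Type} (u v : R -> R -> R -> A) : Prop :=
  forall y0 y1 y2, Om y0 y1 y2 -> u y0 y1 y2 = v y0 y1 y2.

Lemma open3_cube x0 x1 x2 : Om x0 x1 x2 ->
  exists d : posreal, forall y0 y1 y2,
    Rabs (y0 - x0) < d -> Rabs (y1 - x1) < d -> Rabs (y2 - x2) < d -> Om y0 y1 y2.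
Proof.
  intros Hx. destruct (Om_open _ _ _ Hx) as [r [Hr Hball]].
  assert (Hr2 : 0 < r / 2) by lra.
  exists (mkposreal _ Hr2). simpl. intros y0 y1 y2 H0 H1 H2. apply Hball.
  rewrite <- (pow2_abs (y0 - x0)), <- (pow2_abs (y1 - x1)), <- (pow2_abs (y2 - x2)).
  pose proof (Rabs_pos (y0 - x0)); pose proof (Rabs_pos (y1 - x1));
  pose proof (Rabs_pos (y2 - x2)). nra.
Qed.

Lemma pd_ext_on i u v : agree_on u v -> agree_on (pd i u) (pd i v).
Proof.
  intros Huv x0 x1 x2 Hx. destruct (open3_cube _ _ _ Hx) as [d Hd].
  assert (Hz : forall y, Rabs (y - y) < d)
    by (intro; rewrite Rminus_diag, Rabs_R0; apply cond_pos).
  destruct i; simpl; apply Derive_ext_loc; exists d; intros y Hy; apply Huv, Hd; auto.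
Qed.

Lemma ex_pd_ext_on i u v x0 x1 x2 : agree_on u v -> Om x0 x1 x2 ->
  ex_pd i u x0 x1 x2 -> ex_pd i v x0 x1 x2.
Proof.
  intros Huv Hx. destruct (open3_cube _ _ _ Hx) as [d Hd].
  assert (Hz : forall y, Rabs (y - y) < d)
    by (intro; rewrite Rminus_diag, Rabs_R0; apply cond_pos).
  destruct i; simpl; apply ex_derive_ext_loc; exists d; intros y Hy; apply Huv, Hd; auto.
Qed.

Lemma cont3_ext_on u v x0 x1 x2 : agree_on u v -> Om x0 x1 x2 ->
  cont3 u x0 x1 x2 -> cont3 v x0 x1 x2.
Proof.
  intros Huv Hx Hu eps Heps. destruct (open3_cube _ _ _ Hx) as [d Hd].
  destruct (Hu eps Heps) as [du [Hdu Hu']].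
  pose proof (cond_pos d); pose proof (Rmin_l du d); pose proof (Rmin_r du d).
  exists (Rmin du d); split; [apply Rmin_glb_lt; lra|].
  intros y0 y1 y2 Hy0 Hy1 Hy2.
  rewrite <- (Huv x0 x1 x2 Hx), <- Huv by (apply Hd; lra).
  apply Hu'; lra.
Qed.

Lemma pds_ext_on l u v : agree_on u v -> agree_on (pds l u) (pds l v).
Proof.
  intros Huv. induction l as [|i l IH]; [assumption|].
  apply pd_ext_on, IH.
Qed.

Lemma Ck_ext_on k u v : agree_on u v -> Ck k Om u -> Ck k Om v.
Proof.
  intros Huv Hu l Hl. destruct (Hu l Hl) as [Hc He]. split.
  - intros x0 x1 x2 Hx. apply (cont3_ext_on (pds l u)); auto. apply pds_ext_on, Huv.
  - intros Hlt i x0 x1 x2 Hx. apply (ex_pd_ext_on i (pds l u)); auto. apply pds_ext_on, Huv.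
Qed.

Lemma pds_lin_on k l u v a b : Ck k Om u -> Ck k Om v -> (length l <= k)%nat ->
  agree_on (fun y0 y1 y2 => a * pds l u y0 y1 y2 + b * pds l v y0 y1 y2)
           (pds l (fun y0 y1 y2 => a * u y0 y1 y2 + b * v y0 y1 y2)).
Proof.
  intros Hu Hv. induction l as [|i l IH]; intros Hl y0 y1 y2 Hy; [reflexivity|].
  simpl in Hl |- *. rewrite <- (pd_ext_on i _ _ (IH ltac:(lia)) y0 y1 y2 Hy).
  symmetry. apply pd_lin; [apply Hu | apply Hv]; auto; lia.
Qed.

Lemma Ck_lin k u v a b : Ck k Om u -> Ck k Om v ->
  Ck k Om (fun y0 y1 y2 => a * u y0 y1 y2 + b * v y0 y1 y2).
Proof.
  intros Hu Hv l Hl. pose proof (pds_lin_on k l u v a b Hu Hv Hl) as Hlin. split.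
  - intros x0 x1 x2 Hx. apply (cont3_ext_on _ _ _ _ _ Hlin Hx).
    apply cont3_lin; [apply Hu | apply Hv]; auto.
  - intros Hlt i x0 x1 x2 Hx. apply (ex_pd_ext_on i _ _ _ _ _ Hlin Hx).
    apply ex_pd_lin; [apply Hu | apply Hv]; auto; lia.
Qed.

Ltac Ck_by_lin a b u v :=
  apply (Ck_ext_on _ (fun y0 y1 y2 => a * u y0 y1 y2 + b * v y0 y1 y2));
  [intros ? ? ? _; ring | apply Ck_lin; assumption].

Lemma Ck_plus k u v : Ck k Om u -> Ck k Om v ->
  Ck k Om (fun y0 y1 y2 => u y0 y1 y2 + v y0 y1 y2).
Proof. intros; Ck_by_lin 1 1 u v. Qed.

Lemma Ck_minus k u v : Ck k Om u -> Ck k Om v ->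
  Ck k Om (fun y0 y1 y2 => u y0 y1 y2 - v y0 y1 y2).
Proof. intros; Ck_by_lin 1 (-1) u v. Qed.

Lemma Ck_opp k u : Ck k Om u -> Ck k Om (fun y0 y1 y2 => - u y0 y1 y2).
Proof. intros; Ck_by_lin (-1) 0 u u. Qed.

Lemma Ck_scal k c u : Ck k Om u -> Ck k Om (fun y0 y1 y2 => c * u y0 y1 y2).
Proof. intros; Ck_by_lin c 0 u u. Qed.

Lemma Ck_scal_r k c u : Ck k Om u -> Ck k Om (fun y0 y1 y2 => u y0 y1 y2 * c).
Proof. intros; Ck_by_lin c 0 u u. Qed.

Lemma Ck_const k c : Ck k Om (fun _ _ _ => c).
Proof.
  assert (Hconst : forall l, exists r, forall y0 y1 y2, pds l (fun _ _ _ => c) y0 y1 y2 = r).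
  { induction l as [|i l [r Hr]]; [exists c; auto|].
    exists 0. intros y0 y1 y2. destruct i; simpl;
      rewrite (Derive_ext _ (fun _ => r)) by (intro; apply Hr); apply Derive_const. }
  intros l _. destruct (Hconst l) as [r Hr]. split.
  - intros x0 x1 x2 _ eps Heps. exists 1. split; [lra|].
    intros. rewrite !Hr, Rminus_diag, Rabs_R0. exact Heps.
  - intros _ i x0 x1 x2 _. destruct i; simpl;
      apply (ex_derive_ext (fun _ => r)); try (intro; symmetry; apply Hr);
      apply ex_derive_const.
Qed.

Lemma pds_snoc l i g : pds l (pd i g) = pds (l ++ [i]) g.
Proof. induction l as [|j l IH]; simpl; congruence. Qed.

Lemma Ck_pd k i g : Ck (S k) Om g -> Ck k Om (pd i g).
Proof.
  intros Hg l Hl. rewrite pds_snoc.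
  destruct (Hg (l ++ [i])) as [Hc He]; [rewrite length_app; simpl; lia|].
  split; auto. intros Hlt. apply He. rewrite length_app; simpl; lia.
Qed.

Lemma Ck_le m n g : (n <= m)%nat -> Ck m Om g -> Ck n Om g.
Proof.
  intros Hnm Hg l Hl. destruct (Hg l ltac:(lia)) as [Hc He].
  split; auto. intros Hlt. apply He. lia.
Qed.

Lemma cont3_slices (h : rfun) x0 x1 x2 : cont3 h x0 x1 x2 ->
  continuity_2d_pt (fun u v => h u v x2) x0 x1 /\
  continuity_2d_pt (fun u v => h u x1 v) x0 x2 /\
  continuity_2d_pt (fun u v => h x0 u v) x1 x2.
Proof.
  intros H. repeat split; intros eps; destruct (H eps (cond_pos eps)) as [d [Hd Hh]];
    exists (mkposreal d Hd); simpl; intros u v Hu Hv; apply Hh; auto;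
    rewrite Rminus_diag, Rabs_R0; lra.
Qed.

Lemma pd_comm i j g x0 x1 x2 : Ck 2 Om g -> Om x0 x1 x2 ->
  pd i (pd j g) x0 x1 x2 = pd j (pd i g) x0 x1 x2.
Proof.
  intros Hg Hx. destruct (open3_cube _ _ _ Hx) as [d Hd].
  assert (Hz : forall y, Rabs (y - y) < d)
    by (intro; rewrite Rminus_diag, Rabs_R0; apply cond_pos).
  assert (Hex : forall l k y0 y1 y2, (length l <= 1)%nat -> Om y0 y1 y2 ->
    ex_pd k (pds l g) y0 y1 y2) by (intros; apply (Hg l); auto; lia).
  assert (Hct : forall k l, cont3 (pd k (pd l g)) x0 x1 x2)
    by (intros k l; apply (Hg [k; l]); auto).
  assert (S01 : pd I0 (pd I1 g) x0 x1 x2 = pd I1 (pd I0 g) x0 x1 x2).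
  { apply (Schwarz (fun u v => g u v x2)).
    - exists d; intros u v Hu Hv. pose proof (Hd u v x2 Hu Hv (Hz _)).
      repeat split; [apply (Hex [] I0) | apply (Hex [] I1) | apply (Hex [I1] I0)
                    | apply (Hex [I0] I1)]; simpl; auto.
    - exact (proj1 (cont3_slices _ _ _ _ (Hct I0 I1))).
    - exact (proj1 (cont3_slices _ _ _ _ (Hct I1 I0))). }
  assert (S02 : pd I0 (pd I2 g) x0 x1 x2 = pd I2 (pd I0 g) x0 x1 x2).
  { apply (Schwarz (fun u v => g u x1 v)).
    - exists d; intros u v Hu Hv. pose proof (Hd u x1 v Hu (Hz _) Hv).
      repeat split; [apply (Hex [] I0) | apply (Hex [] I2) | apply (Hex [I2] I0)
                    | apply (Hex [I0] I2)]; simpl; auto.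
    - exact (proj1 (proj2 (cont3_slices _ _ _ _ (Hct I0 I2)))).
    - exact (proj1 (proj2 (cont3_slices _ _ _ _ (Hct I2 I0)))). }
  assert (S12 : pd I1 (pd I2 g) x0 x1 x2 = pd I2 (pd I1 g) x0 x1 x2).
  { apply (Schwarz (fun u v => g x0 u v)).
    - exists d; intros u v Hu Hv. pose proof (Hd x0 u v (Hz _) Hu Hv).
      repeat split; [apply (Hex [] I1) | apply (Hex [] I2) | apply (Hex [I2] I1)
                    | apply (Hex [I1] I2)]; simpl; auto.
    - exact (proj2 (proj2 (cont3_slices _ _ _ _ (Hct I1 I2)))).
    - exact (proj2 (proj2 (cont3_slices _ _ _ _ (Hct I2 I1)))). }
  destruct i, j; auto.
Qed.

Lemma pd_zero_on i u : agree_on u (fun _ _ _ => 0) -> agree_on (pd i u) (fun _ _ _ => 0).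
Proof.
  intros Hu y0 y1 y2 Hy. rewrite (pd_ext_on i u _ Hu y0 y1 y2 Hy).
  destruct i; simpl; apply Derive_const.
Qed.

Lemma lap3_zero_on u : agree_on u (fun _ _ _ => 0) -> agree_on (lap3 u) (fun _ _ _ => 0).
Proof.
  intros Hu y0 y1 y2 Hy. unfold lap3.
  rewrite !(fun i => pd_zero_on i (pd i u) (pd_zero_on i u Hu) y0 y1 y2 Hy). ring.
Qed.

Lemma biharmonic_zero : biharmonic Om (fun _ _ _ => 0).
Proof.
  intros y0 y1 y2 Hy.
  apply lap3_zero_on; [apply lap3_zero_on; intros ? ? ? ?; reflexivity | assumption].
Qed.

(** * Quaternion-valued functions *)

Definition hCk (k : nat) (F : hfun) : Prop :=
  Ck k Om (fun y0 y1 y2 => q0 (F y0 y1 y2)) /\ Ck k Om (fun y0 y1 y2 => q1 (F y0 y1 y2)) /\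
  Ck k Om (fun y0 y1 y2 => q2 (F y0 y1 y2)) /\ Ck k Om (fun y0 y1 y2 => q3 (F y0 y1 y2)).

Ltac Ck_linear :=
  repeat first [ apply Ck_plus | apply Ck_minus | apply Ck_opp | apply Ck_scal | apply Ck_scal_r ];
  assumption.

Lemma hCk_qadd k F G : hCk k F -> hCk k G ->
  hCk k (fun y0 y1 y2 => qadd (F y0 y1 y2) (G y0 y1 y2)).
Proof. intros (? & ? & ? & ?) (? & ? & ? & ?); split; [|split; [|split]]; simpl; Ck_linear. Qed.

Lemma hCk_qsub k F G : hCk k F -> hCk k G ->
  hCk k (fun y0 y1 y2 => qsub (F y0 y1 y2) (G y0 y1 y2)).
Proof. intros (? & ? & ? & ?) (? & ? & ? & ?); split; [|split; [|split]]; simpl; Ck_linear. Qed.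

Lemma hCk_qmul_l k c F : hCk k F -> hCk k (fun y0 y1 y2 => qmul c (F y0 y1 y2)).
Proof. intros (? & ? & ? & ?); split; [|split; [|split]]; simpl; Ck_linear. Qed.

Lemma hCk_qmul_r k c F : hCk k F -> hCk k (fun y0 y1 y2 => qmul (F y0 y1 y2) c).
Proof. intros (? & ? & ? & ?); split; [|split; [|split]]; simpl; Ck_linear. Qed.

Lemma hCk_hpd k i F : hCk (S k) F -> hCk k (hpd i F).
Proof. intros (? & ? & ? & ?); split; [|split; [|split]]; apply Ck_pd; assumption. Qed.

Lemma hCk_le m n F : (n <= m)%nat -> hCk m F -> hCk n F.
Proof. intros Hnm (? & ? & ? & ?); split; [|split; [|split]]; apply (Ck_le m); assumption. Qed.

Ltac hCk_closure :=
  repeat first [ apply hCk_qsub | apply hCk_qadd | apply hCk_qmul_l | apply hCk_qmul_r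
               | apply hCk_hpd ];
  assumption.

Lemma hCk_dR k F : hCk (S k) F -> hCk k (dR F).
Proof. intros; unfold dR; hCk_closure. Qed.

Lemma hCk_dbarR k F : hCk (S k) F -> hCk k (dbarR F).
Proof. intros; unfold dbarR; hCk_closure. Qed.

Lemma hCk_ex_pd k i F x0 x1 x2 : hCk (S k) F -> Om x0 x1 x2 ->
  ex_pd i (fun y0 y1 y2 => q0 (F y0 y1 y2)) x0 x1 x2 /\
  ex_pd i (fun y0 y1 y2 => q1 (F y0 y1 y2)) x0 x1 x2 /\
  ex_pd i (fun y0 y1 y2 => q2 (F y0 y1 y2)) x0 x1 x2 /\
  ex_pd i (fun y0 y1 y2 => q3 (F y0 y1 y2)) x0 x1 x2.
Proof.
  intros (H0 & H1 & H2 & H3) Hx.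
  split; [|split; [|split]]; [apply (H0 []) | apply (H1 []) | apply (H2 []) | apply (H3 [])];
    simpl; auto; lia.
Qed.

Lemma hpd_qadd i F G x0 x1 x2 : hCk 1 F -> hCk 1 G -> Om x0 x1 x2 ->
  hpd i (fun y0 y1 y2 => qadd (F y0 y1 y2) (G y0 y1 y2)) x0 x1 x2
  = qadd (hpd i F x0 x1 x2) (hpd i G x0 x1 x2).
Proof.
  intros HF HG Hx.
  destruct (hCk_ex_pd 0 i F _ _ _ HF Hx) as (? & ? & ? & ?).
  destruct (hCk_ex_pd 0 i G _ _ _ HG Hx) as (? & ? & ? & ?).
  unfold hpd, qadd; destruct i; simpl in *; f_equal; Derive_linear.
Qed.

Lemma hpd_qsub i F G x0 x1 x2 : hCk 1 F -> hCk 1 G -> Om x0 x1 x2 ->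
  hpd i (fun y0 y1 y2 => qsub (F y0 y1 y2) (G y0 y1 y2)) x0 x1 x2
  = qsub (hpd i F x0 x1 x2) (hpd i G x0 x1 x2).
Proof.
  intros HF HG Hx.
  destruct (hCk_ex_pd 0 i F _ _ _ HF Hx) as (? & ? & ? & ?).
  destruct (hCk_ex_pd 0 i G _ _ _ HG Hx) as (? & ? & ? & ?).
  unfold hpd, qsub, qadd, qopp; destruct i; simpl in *; f_equal; Derive_linear.
Qed.

Lemma hpd_qmul_l i c F x0 x1 x2 : hCk 1 F -> Om x0 x1 x2 ->
  hpd i (fun y0 y1 y2 => qmul c (F y0 y1 y2)) x0 x1 x2 = qmul c (hpd i F x0 x1 x2).
Proof.
  intros HF Hx. destruct (hCk_ex_pd 0 i F _ _ _ HF Hx) as (? & ? & ? & ?).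
  unfold hpd, qmul; destruct i; simpl in *; f_equal; Derive_linear.
Qed.

Lemma hpd_qmul_r i c F x0 x1 x2 : hCk 1 F -> Om x0 x1 x2 ->
  hpd i (fun y0 y1 y2 => qmul (F y0 y1 y2) c) x0 x1 x2 = qmul (hpd i F x0 x1 x2) c.
Proof.
  intros HF Hx. destruct (hCk_ex_pd 0 i F _ _ _ HF Hx) as (? & ? & ? & ?).
  unfold hpd, qmul; destruct i; simpl in *; f_equal; Derive_linear.
Qed.

Lemma hpd_ext_on i F G : agree_on F G -> agree_on (hpd i F) (hpd i G).
Proof.
  intros HFG y0 y1 y2 Hy. unfold hpd.
  f_equal; apply pd_ext_on; auto; intros z0 z1 z2 Hz; rewrite HFG; auto.
Qed.

Lemma hpd_zero_on i F :
  agree_on F (fun _ _ _ => qzero) -> agree_on (hpd i F) (fun _ _ _ => qzero).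
Proof.
  intros HF y0 y1 y2 Hy. unfold hpd, qzero.
  f_equal; apply pd_zero_on; auto; intros z0 z1 z2 Hz; rewrite HF; auto.
Qed.

Lemma hpd_comm i j F x0 x1 x2 : hCk 2 F -> Om x0 x1 x2 ->
  hpd i (hpd j F) x0 x1 x2 = hpd j (hpd i F) x0 x1 x2.
Proof.
  intros (H0 & H1 & H2 & H3) Hx. unfold hpd; cbn [q0 q1 q2 q3].
  f_equal; apply pd_comm; assumption.
Qed.

(** * The first- and second-order operators *)

Ltac expand_hpd :=
  repeat first [ rewrite hpd_qsub by hCk_closure | rewrite hpd_qadd by hCk_closure
               | rewrite hpd_qmul_l by hCk_closure | rewrite hpd_qmul_r by hCk_closure ].

Lemma hpd_dL i F x0 x1 x2 : hCk 2 F -> Om x0 x1 x2 ->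
  hpd i (dL F) x0 x1 x2 = dL (hpd i F) x0 x1 x2.
Proof.
  intros. unfold dL. expand_hpd.
  rewrite (hpd_comm i I0), (hpd_comm i I1), (hpd_comm i I2) by assumption. reflexivity.
Qed.

Lemma hpd_dR i F x0 x1 x2 : hCk 2 F -> Om x0 x1 x2 ->
  hpd i (dR F) x0 x1 x2 = dR (hpd i F) x0 x1 x2.
Proof.
  intros. unfold dR. expand_hpd.
  rewrite (hpd_comm i I0), (hpd_comm i I1), (hpd_comm i I2) by assumption. reflexivity.
Qed.

Lemma hpd_dbarL i F x0 x1 x2 : hCk 2 F -> Om x0 x1 x2 ->
  hpd i (dbarL F) x0 x1 x2 = dbarL (hpd i F) x0 x1 x2.
Proof.
  intros. unfold dbarL. expand_hpd.
  rewrite (hpd_comm i I0), (hpd_comm i I1), (hpd_comm i I2) by assumption. reflexivity.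
Qed.

Lemma hpd_dbarR i F x0 x1 x2 : hCk 2 F -> Om x0 x1 x2 ->
  hpd i (dbarR F) x0 x1 x2 = dbarR (hpd i F) x0 x1 x2.
Proof.
  intros. unfold dbarR. expand_hpd.
  rewrite (hpd_comm i I0), (hpd_comm i I1), (hpd_comm i I2) by assumption. reflexivity.
Qed.

Lemma dL_ext_on F G : agree_on F G -> agree_on (dL F) (dL G).
Proof.
  intros HFG y0 y1 y2 Hy. unfold dL.
  rewrite !(fun i => hpd_ext_on i F G HFG y0 y1 y2 Hy). reflexivity.
Qed.

Lemma dbarL_ext_on F G : agree_on F G -> agree_on (dbarL F) (dbarL G).
Proof.
  intros HFG y0 y1 y2 Hy. unfold dbarL.
  rewrite !(fun i => hpd_ext_on i F G HFG y0 y1 y2 Hy). reflexivity.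
Qed.

Definition hlap (F : hfun) : hfun := fun x0 x1 x2 =>
  mkQ (lap3 (fun y0 y1 y2 => q0 (F y0 y1 y2)) x0 x1 x2)
      (lap3 (fun y0 y1 y2 => q1 (F y0 y1 y2)) x0 x1 x2)
      (lap3 (fun y0 y1 y2 => q2 (F y0 y1 y2)) x0 x1 x2)
      (lap3 (fun y0 y1 y2 => q3 (F y0 y1 y2)) x0 x1 x2).

Lemma hlap_hpd F x0 x1 x2 : hlap F x0 x1 x2 =
  qadd (qadd (hpd I0 (hpd I0 F) x0 x1 x2) (hpd I1 (hpd I1 F) x0 x1 x2))
       (hpd I2 (hpd I2 F) x0 x1 x2).
Proof. reflexivity. Qed.

Lemma hlap_ext_on F G : agree_on F G -> agree_on (hlap F) (hlap G).
Proof.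
  intros HFG y0 y1 y2 Hy. rewrite !hlap_hpd.
  rewrite !(fun i => hpd_ext_on i _ _ (hpd_ext_on i F G HFG) y0 y1 y2 Hy). reflexivity.
Qed.

Ltac second_order_identity F :=
  intros HF y0 y1 y2 Hy;
  try rewrite hlap_hpd;
  rewrite ?hpd_dL, ?hpd_dR, ?hpd_dbarL, ?hpd_dbarR by assumption;
  unfold dL, dR, dbarL, dbarR;
  rewrite ?(hpd_comm I1 I0 F y0 y1 y2), ?(hpd_comm I2 I0 F y0 y1 y2),
    ?(hpd_comm I2 I1 F y0 y1 y2) by assumption;
  quat_ring.

Lemma dbarL_dL F : hCk 2 F -> agree_on (dbarL (dL F)) (hlap F).
Proof. unfold agree_on, dbarL. second_order_identity F. Qed.

Lemma dL_dbarL F : hCk 2 F -> agree_on (dL (dbarL F)) (hlap F).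
Proof. unfold agree_on, dL. second_order_identity F. Qed.

Lemma dbarR_dR F : hCk 2 F -> agree_on (dbarR (dR F)) (hlap F).
Proof. unfold agree_on, dbarR. second_order_identity F. Qed.

Lemma dR_dbarR F : hCk 2 F -> agree_on (dR (dbarR F)) (hlap F).
Proof. unfold agree_on, dR. second_order_identity F. Qed.

Lemma dbarR_dL F : hCk 2 F -> agree_on (dbarR (dL F)) (dL (dbarR F)).
Proof. unfold agree_on. unfold dL at 2. unfold dbarR at 1. second_order_identity F. Qed.

Lemma dR_dbarL F : hCk 2 F -> agree_on (dR (dbarL F)) (dbarL (dR F)).
Proof. unfold agree_on. unfold dbarL at 2. unfold dR at 1. second_order_identity F. Qed.

Lemma dbar2_dd2 F : hCk 4 F -> agree_on (dbar2 (dd2 F)) (hlap (hlap F)).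
Proof.
  intros HF y0 y1 y2 Hy. unfold dbar2, dd2.
  assert (HR : hCk 3 (dR F)) by (apply hCk_dR; assumption).
  rewrite (dbarL_ext_on _ _ (dbarR_dL _ (hCk_le 3 2 _ ltac:(lia) HR)) y0 y1 y2 Hy).
  rewrite (dbarL_dL _ (hCk_dbarR 2 _ HR) y0 y1 y2 Hy).
  exact (hlap_ext_on _ _ (dbarR_dR F (hCk_le 4 2 F ltac:(lia) HF)) y0 y1 y2 Hy).
Qed.

Lemma dd2_dbar2 F : hCk 4 F -> agree_on (dd2 (dbar2 F)) (hlap (hlap F)).
Proof.
  intros HF y0 y1 y2 Hy. unfold dbar2, dd2.
  assert (HR : hCk 3 (dbarR F)) by (apply hCk_dbarR; assumption).
  rewrite (dL_ext_on _ _ (dR_dbarL _ (hCk_le 3 2 _ ltac:(lia) HR)) y0 y1 y2 Hy).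
  rewrite (dL_dbarL _ (hCk_dR 2 _ HR) y0 y1 y2 Hy).
  exact (hlap_ext_on _ _ (dR_dbarR F (hCk_le 4 2 F ltac:(lia) HF)) y0 y1 y2 Hy).
Qed.

Lemma dd2_zero_on F :
  agree_on F (fun _ _ _ => qzero) -> agree_on (dd2 F) (fun _ _ _ => qzero).
Proof.
  intros HF.
  assert (HR : agree_on (dR F) (fun _ _ _ => qzero)).
  { intros y0 y1 y2 Hy. unfold dR.
    rewrite !(fun i => hpd_zero_on i F HF y0 y1 y2 Hy). quat_ring. }
  intros y0 y1 y2 Hy. unfold dd2, dL.
  rewrite !(fun i => hpd_zero_on i _ HR y0 y1 y2 Hy). quat_ring.
Qed.

Lemma dbar2_zero_on F :
  agree_on F (fun _ _ _ => qzero) -> agree_on (dbar2 F) (fun _ _ _ => qzero).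
Proof.
  intros HF.
  assert (HR : agree_on (dbarR F) (fun _ _ _ => qzero)).
  { intros y0 y1 y2 Hy. unfold dbarR.
    rewrite !(fun i => hpd_zero_on i F HF y0 y1 y2 Hy). quat_ring. }
  intros y0 y1 y2 Hy. unfold dbar2, dbarL.
  rewrite !(fun i => hpd_zero_on i _ HR y0 y1 y2 Hy). quat_ring.
Qed.

Lemma hlap_hlap_zero_iff F :
  agree_on (hlap (hlap F)) (fun _ _ _ => qzero) <->
  biharmonic Om (fun y0 y1 y2 => q0 (F y0 y1 y2)) /\
  biharmonic Om (fun y0 y1 y2 => q1 (F y0 y1 y2)) /\
  biharmonic Om (fun y0 y1 y2 => q2 (F y0 y1 y2)) /\
  biharmonic Om (fun y0 y1 y2 => q3 (F y0 y1 y2)).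
Proof.
  split.
  - intros H. split; [|split; [|split]]; intros y0 y1 y2 Hy;
      [exact (f_equal q0 (H y0 y1 y2 Hy)) | exact (f_equal q1 (H y0 y1 y2 Hy))
      | exact (f_equal q2 (H y0 y1 y2 Hy)) | exact (f_equal q3 (H y0 y1 y2 Hy))].
  - intros (H0 & H1 & H2 & H3) y0 y1 y2 Hy. unfold hlap at 1, qzero.
    f_equal; [apply H0 | apply H1 | apply H2 | apply H3]; assumption.
Qed.

End OnOpenSet.

Theorem proposition2p2 (Om : region) (HOm : domain3 Om) :
  (forall b : rfun, Ck 4 Om b -> biharmonic Om b ->
     inframonogenic Om (dd2 (hreal b)) /\
     antiinframonogenic Om (dbar2 (hreal b))) /\
  (forall f0 f1 f2 : rfun, Ck 4 Om f0 -> Ck 4 Om f1 -> Ck 4 Om f2 ->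
     (inframonogenic Om (hvec f0 f1 f2) \/ antiinframonogenic Om (hvec f0 f1 f2)) ->
     biharmonic Om f0 /\ biharmonic Om f1 /\ biharmonic Om f2).
Proof.
  destruct HOm as [Hopen _]. split.
  - intros b Hb Hbih.
    assert (HB : hCk Om 4 (hreal b))
      by exact (conj Hb (conj (Ck_const _ _ 0) (conj (Ck_const _ _ 0) (Ck_const _ _ 0)))).
    pose proof (biharmonic_zero Om Hopen) as Hzero.
    assert (Hbih4 : agree_on Om (hlap (hlap (hreal b))) (fun _ _ _ => qzero))
      by (apply hlap_hlap_zero_iff; exact (conj Hbih (conj Hzero (conj Hzero Hzero)))).
    split; intros x0 x1 x2 Hx.
    + rewrite (dbar2_dd2 Om Hopen _ HB x0 x1 x2 Hx). exact (Hbih4 x0 x1 x2 Hx).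
    + rewrite (dd2_dbar2 Om Hopen _ HB x0 x1 x2 Hx). exact (Hbih4 x0 x1 x2 Hx).
  - intros f0 f1 f2 H0 H1 H2 Hf.
    assert (HF : hCk Om 4 (hvec f0 f1 f2))
      by exact (conj H0 (conj H1 (conj H2 (Ck_const _ _ 0)))).
    assert (Hbih4 : agree_on Om (hlap (hlap (hvec f0 f1 f2))) (fun _ _ _ => qzero)).
    { intros x0 x1 x2 Hx. destruct Hf as [Hinf | Hanti].
      - rewrite <- (dd2_dbar2 Om Hopen _ HF x0 x1 x2 Hx).
        exact (dd2_zero_on Om Hopen _ Hinf x0 x1 x2 Hx).
      - rewrite <- (dbar2_dd2 Om Hopen _ HF x0 x1 x2 Hx).
        exact (dbar2_zero_on Om Hopen _ Hanti x0 x1 x2 Hx). }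
    apply hlap_hlap_zero_iff in Hbih4. tauto.
Qed.
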